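(* Let $S$ be a topological space and let $I\subseteq \mathscr{C}(S)[x_1,\dots,x_n]$ be an ideal. Then for every open set $U\subseteq S$ we have $IV(I)(U)=FRad(I)(U)$, i.e. $IV(I)=FRad(I)$ as presheaves on $S$.
   Context: For a subset $U\subseteq S$, $\mathscr{C}(U)$ is the ring of continuous complex-valued functions on $U$, and $\mathscr{C}[x_1,\dots,x_n](U):=\mathscr{C}(U)[x_1,\dots,x_n]$. For $f=\sum_\alpha a_\alpha x^\alpha\in \mathscr{C}[x_1,\dots,x_n](U)$ and $s\in U$, write $f_s=\sum_\alpha a_\alpha(s)x^\alpha\in\mathbb{C}[x_1,\dots,x_n]$. For the ideal $I$ of global sections, $I(U)$ denotes the ideal of $\mathscr{C}[x_1,\dots,x_n](U)$ generated by the restrictions $f|_U$, $f\in I$, and $I(U)|_s=\{g_s : g\in I(U)\}$. Define $V(I)(U)=\{(s,x)\in U\times\mathbb{C}^n : g_s(x)=0 \text{ for all } g\in I(U)\}$, $IV(I)(U)=\{f\in \mathscr{C}[x_1,\dots,x_n](U) : f_s(x)=0 \text{ for all }(s,x)\in V(I)(U)\}$, and the fibrewise radical $FRad(I)(U)=\{f\in \mathscr{C}[x_1,\dots,x_n](U): f_s\in\sqrt{I(U)|_s}\text{ for all } s\in U\}$, where $\sqrt{\cdot}$ is the usual radical in $\mathbb{C}[x_1,\dots,x_n]$. *)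

From HB Require Import structures.
From mathcomp Require Import all_boot all_order all_algebra.
From mathcomp Require Import mpoly.
From mathcomp Require Import all_classical all_reals topology subtype_topology.
From mathcomp.real_closed Require Import complex.

Set Implicit Arguments.
Unset Strict Implicit.
Unset Printing Implicit Defensive.

Import GRing.Theory Num.Theory.
Import numFieldTopology.Exports.
Local Open Scope ring_scope.
Local Open Scope classical_set_scope.

(* The complex numbers R[i] (R a real type) carry the usual metric topology
   given by the complex modulus. *)
HB.instance Definition _ (R : rcfType) := PseudoPointedMetric.copy R[i] (R[i])^o.

Definition Cpoly (R : realType) (n : nat) := mpoly.mpoly n R[i].

(* An element f of C(T)[x_1..x_n] is encoded by the family of its fibres
   s |-> f_s in C[x_1..x_n] ("f_s" = evaluation of the coefficients at s).
   Such a family comes from a polynomial with continuous coefficients iff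
   its monomial supports are contained in a fixed finite set of monomials and
   each coefficient s |-> coeff_m(f_s) is continuous on T.  Ring operations of
   C(T)[x] correspond to pointwise operations on families. *)
Definition contpoly (R : realType) (n : nat) (T : topologicalType)
    (f : T -> Cpoly R n) : Prop :=
  (exists ms : seq (mpoly.multinom n),
      forall (s : T) (m : mpoly.multinom n),
        m \in mpoly.msupp (f s) -> m \in ms) /\
  (forall m : mpoly.multinom n, continuous (fun s : T => mpoly.mcoeff m (f s))).
Arguments contpoly {R n T} f.

Definition is_ideal (R : realType) (n : nat) (S : topologicalType)
    (I : set (S -> Cpoly R n)) : Prop :=
  [/\ forall f, I f -> contpoly f,
      I (fun _ => 0),
      forall f g, I f -> I g -> I (fun s => f s + g s)
    & forall h f, contpoly h -> I f -> I (fun s => h s * f s)].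
Arguments is_ideal {R n S} I.

Definition ideal_on (R : realType) (n : nat) (S : topologicalType)
    (I : set (S -> Cpoly R n)) (U : set S) : set (set_type U -> Cpoly R n) :=
  [set g | exists (k : nat) (h : 'I_k -> set_type U -> Cpoly R n)
                  (f : 'I_k -> S -> Cpoly R n),
     [/\ forall i, contpoly (h i), forall i, I (f i)
       & g = fun s => \sum_(i < k) h i s * f i (set_val s)]].
Arguments ideal_on {R n S} I U.

Definition fibre_ideal (R : realType) (n : nat) (S : topologicalType)
    (I : set (S -> Cpoly R n)) (U : set S) (s : set_type U) : set (Cpoly R n) :=
  [set p | exists g, ideal_on I U g /\ p = g s].
Arguments fibre_ideal {R n S} I U s.

Definition radical (R : realType) (n : nat) (J : set (Cpoly R n)) : set (Cpoly R n) :=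
  [set p | exists k : nat, J (p ^+ k)].
Arguments radical {R n} J.

Definition zero_set (R : realType) (n : nat) (S : topologicalType)
    (I : set (S -> Cpoly R n)) (U : set S) : set (set_type U * ('I_n -> R[i])) :=
  [set sx | forall g, ideal_on I U g -> mpoly.meval sx.2 (g sx.1) = 0].
Arguments zero_set {R n S} I U.

Definition IV (R : realType) (n : nat) (S : topologicalType)
    (I : set (S -> Cpoly R n)) (U : set S) : set (set_type U -> Cpoly R n) :=
  [set f | contpoly f /\
     forall s x, zero_set I U (s, x) -> mpoly.meval x (f s) = 0].
Arguments IV {R n S} I U.

Definition FRad (R : realType) (n : nat) (S : topologicalType)
    (I : set (S -> Cpoly R n)) (U : set S) : set (set_type U -> Cpoly R n) :=
  [set f | contpoly f /\ forall s, radical (fibre_ideal I U s) (f s)].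
Arguments FRad {R n S} I U.

From HB Require Import structures.
From mathcomp Require Import all_boot all_order all_algebra.
From mathcomp Require Import mpoly.
From mathcomp Require Import all_classical all_reals topology subtype_topology.
From mathcomp Require Import normedtype sequences.
From mathcomp Require Import ring.
From mathcomp.real_closed Require Import complex.

Set Implicit Arguments.
Unset Strict Implicit.
Unset Printing Implicit Defensive.

Import GRing.Theory Num.Theory.
Local Open Scope ring_scope.
Local Open Scope classical_set_scope.

(* A fibre [f_s] outside the radical of [I(U)|_s] is detected by a point of
   the zero set of [I(U)|_s] by the strong Nullstellensatz in [C[x_1..x_n]],
   and powers of elements of [I(U)|_s] vanish wherever [I(U)|_s] does.
   The Nullstellensatz is proved with Zorn's lemma: an ideal [M] maximal among
   those containing [J] and avoiding the powers of [f] is prime, and since [C]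
   is uncountable it contains some [X_i - x_i] for every [i]; then [x] is a
   zero of [J] where [f] does not vanish. *)

Definition uncountable (K : eqType) := forall h : nat -> K, exists x, forall i, x != h i.

Lemma realType_uncountable (R : realType) : uncountable R.
Proof.
move=> h; have [|x [_ Hx]] := @Baire R R^o (fun i => ~` [set h i]) _ setT
  (ex_intro _ 0 I) openT.
  move=> i; split; last exact: dense_set1C.
  by rewrite openC; apply/accessible_closed_set1/hausdorff_accessible/norm_hausdorff.
by exists x => i; apply/eqP; exact: Hx.
Qed.

Lemma complex_uncountable (R : realType) : uncountable R[i].
Proof.
move=> h; have [x Hx] := realType_uncountable (fun i => complex.Re (h i)).
by exists (complex.Complex x 0) => i; apply: contra (Hx i) => /eqP <-.
Qed.

Lemma bounded_uniq_cover (K : eqType) (A : set K) (N : nat) :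
  (forall s, uniq s -> (forall c, c \in s -> A c) -> (size s <= N)%N) ->
  exists s, uniq s /\ forall c, A c -> c \in s.
Proof.
move=> bounded.
pose P k := `[< exists2 s, uniq s & size s = k /\ forall c, c \in s -> A c >].
have P0 : exists k, P k by exists 0%N; apply/asboolP; exists [::].
have PN k : P k -> (k <= N)%N by move=> /asboolP[s us [<- sA]]; exact: bounded.
case: (ex_maxnP P0 PN) => k /asboolP[s us [sz sA]] kmax.
exists s; split=> // c Ac; apply: contraT => cs.
have : P k.+1.
  apply/asboolP; exists (c :: s); first by rewrite /= cs.
  by split=> [|d]; [rewrite /= sz | rewrite inE => /predU1P[->|/sA]].
by move/kmax; rewrite ltnn.
Qed.

(* An uncountable set cannot be covered by countably many finite fibres. *)
Lemma uncountable_large_fibre (K : eqType) (T : countType) (k0 : K)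
    (phi : K -> T) (N : T -> nat) :
  uncountable K ->
  exists t (s : seq K),
    [/\ uniq s, size s = (N t).+1 & forall c, c \in s -> phi c = t].
Proof.
move=> unc; apply: boolp.contrapT => small.
have cover t : exists s : seq K, uniq s /\ forall c, phi c = t -> c \in s.
  apply: (@bounded_uniq_cover _ [set c | phi c = t] (N t)) => s us sA.
  rewrite leqNgt; apply/negP => lt; apply: small.
  exists t, (take (N t).+1 s); split; first exact: take_uniq.
    by rewrite size_takel.
  by move=> c /mem_take /sA.
have [S HS] := boolp.choice cover.
pose h i := if @unpickle (T * nat)%type i is Some (t, j) then nth k0 (S t) j else k0.
have [x Hx] := unc h.
have := Hx (pickle (phi x, index x (S (phi x)))).
by rewrite /h pickleK nth_index ?eqxx //; case: (HS (phi x)) => _; apply.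
Qed.

Section RingIdeals.
Variable R : comPzRingType.
Implicit Types (J M : set R) (f g : R).

Definition is_ring_ideal J :=
  [/\ J 0, forall a b, J a -> J b -> J (a + b) & forall q a, J a -> J (q * a)].

Definition avoids_powers J f := forall k, ~ J (f ^+ k).

Definition ideal_adjoin J g := [set x | exists u m, J m /\ x = u * g + m].

(* Maximality among the ideals avoiding the powers of [f], stated concretely:
   adjoining any [g] outside [M] produces a power of [f]. *)
Definition maximal_avoiding M f :=
  [/\ is_ring_ideal M, avoids_powers M f &
      forall g, ~ M g -> exists k, ideal_adjoin M g (f ^+ k)].

Section IdealTheory.
Variables (J : set R) (J_ideal : is_ring_ideal J).

Lemma ideal0 : J 0. Proof. by case: J_ideal. Qed.

Lemma idealD a b : J a -> J b -> J (a + b). Proof. by case: J_ideal => _ + _; apply. Qed.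

Lemma idealMl q a : J a -> J (q * a). Proof. by case: J_ideal => _ _; apply. Qed.

Lemma idealMr q a : J a -> J (a * q). Proof. by rewrite mulrC; apply: idealMl. Qed.

Lemma idealN a : J a -> J (- a). Proof. by rewrite -mulN1r; apply: idealMl. Qed.

Lemma idealB a b : J a -> J b -> J (a - b).
Proof. by move=> Ja Jb; apply/idealD/idealN. Qed.

Lemma ideal_sum (I : Type) (r : seq I) (F : I -> R) :
  (forall i, J (F i)) -> J (\sum_(i <- r) F i).
Proof. by move=> JF; apply: (big_ind J ideal0 idealD) => i _; apply: JF. Qed.

Lemma ideal_adjoin_ideal g : is_ring_ideal (ideal_adjoin J g).
Proof.
split.
- by exists 0, 0; split; [exact: ideal0 | rewrite mul0r addr0].
- move=> _ _ [u1 [m1 [Jm1 ->]]] [u2 [m2 [Jm2 ->]]].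
  exists (u1 + u2), (m1 + m2); split; first exact: idealD.
  by rewrite mulrDl -!addrA (addrCA m1).
- move=> q _ [u [m [Jm ->]]]; exists (q * u), (q * m); split; first exact: idealMl.
  by rewrite mulrDr mulrA.
Qed.

Lemma sub_ideal_adjoin g : J `<=` ideal_adjoin J g.
Proof. by move=> x Jx; exists 0, x; rewrite mul0r add0r. Qed.

Lemma ideal_adjoin_gen g : ideal_adjoin J g g.
Proof. by exists 1, 0; split; [exact: ideal0 | rewrite mul1r addr0]. Qed.

End IdealTheory.

Lemma bigcup_chain_ideal (F : set (set R)) :
  (forall X, F X -> X = set0 \/ is_ring_ideal X) -> total_on F subset ->
  (exists2 X, F X & X !=set0) -> is_ring_ideal (\bigcup_(X in F) X).
Proof.
move=> Fideal Ftot [X0 FX0 [x0 X0x0]].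
have idealF X x : F X -> X x -> is_ring_ideal X.
  by move=> FX Xx; case: (Fideal X FX) => // X_0; rewrite X_0 in Xx.
split.
- by exists X0 => //; apply: ideal0 (idealF _ _ FX0 X0x0).
- move=> a b [X FX Xa] [Y FY Yb].
  have [XY|YX] := Ftot X Y FX FY.
  + by exists Y => //; apply: (idealD (idealF _ _ FY Yb)) (XY _ Xa) Yb.
  + by exists X => //; apply: (idealD (idealF _ _ FX Xa)) Xa (YX _ Yb).
- by move=> q a [X FX Xa]; exists X => //; apply: (idealMl (idealF _ _ FX Xa)).
Qed.

Lemma maximal_avoiding_exists J f :
  is_ring_ideal J -> avoids_powers J f ->
  exists M, J `<=` M /\ maximal_avoiding M f.
Proof.
move=> J_ideal Jf.
pose good X := [/\ is_ring_ideal X, J `<=` X & avoids_powers X f].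
(* [set0] is admitted because it is the union of the empty chain *)
have [A [[A0|[A_ideal JA Af]] Amax]] :
    exists A, (A = set0 \/ good A) /\ forall B, A `<` B -> ~ (B = set0 \/ good B).
- apply: Zorn_bigcup => F Fgood Ftot.
  have [[X0 FX0 X0n0]|F0] := boolp.pselect (exists2 X, F X & X !=set0); last first.
    left; apply/seteqP; split=> // x [X FX Xx].
    by apply: F0; exists X => //; exists x.
  have goodF X x : F X -> X x -> good X.
    by move=> FX Xx; case: (Fgood X FX) => // X_0; rewrite X_0 in Xx.
  have [x0 X0x0] := X0n0; have [_ JX0 _] := goodF X0 x0 FX0 X0x0.
  right; split.
  + apply: bigcup_chain_ideal => //; last by exists X0.
    by move=> X FX; case: (Fgood X FX) => [|[]]; [left | right].
  + by move=> x Jx; exists X0 => //; apply: JX0.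
  + by move=> k [X FX Xf]; case: (goodF X _ FX Xf) => _ _ /(_ k).
- exfalso; apply: (Amax J); last by right; split.
  by rewrite A0; split=> // /(_ 0 (ideal0 J_ideal)).
exists A; split=> //; split=> // g Ag.
have AB : A `<` ideal_adjoin A g.
  by split=> [|/(_ g (ideal_adjoin_gen A_ideal g))//]; apply: sub_ideal_adjoin.
apply: boolp.contrapT => /boolp.forallNP Bf; apply: (Amax _ AB); right.
split; [exact: ideal_adjoin_ideal | by move=> x /JA /(properW AB) | exact: Bf].
Qed.

Section MaximalAvoiding.
Variables (M : set R) (f : R) (Mmax : maximal_avoiding M f).

Let M_ideal : is_ring_ideal M. Proof. by case: Mmax. Qed.

Lemma maximal_avoiding_proper : ~ M 1.
Proof. by case: Mmax => _ /(_ 0%N); rewrite expr0. Qed.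

Lemma maximal_avoiding_prime a b : M (a * b) -> M a \/ M b.
Proof.
move=> Mab; apply: boolp.contrapT => /boolp.not_orP[Ma Mb].
case: Mmax => _ Mf Menlarge.
have [k1 [u1 [m1 [Mm1 E1]]]] := Menlarge a Ma.
have [k2 [u2 [m2 [Mm2 E2]]]] := Menlarge b Mb.
apply: (Mf (k1 + k2)%N); rewrite exprD E1 E2.
have -> : (u1 * a + m1) * (u2 * b + m2) =
    (u1 * u2) * (a * b) + (u1 * a * m2 + m1 * (u2 * b + m2)) by ring.
apply: idealD => //; first exact: idealMl.
by apply: idealD => //; [apply: idealMl | apply: idealMr].
Qed.

End MaximalAvoiding.

End RingIdeals.

Section MpolyIdeals.
Variables (R : comNzRingType) (n : nat).
Implicit Types (M : set {mpoly R[n]}) (p : {mpoly R[n]}).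

Lemma mpoly_sub_meval_ideal M (x : 'I_n -> R) p :
  is_ring_ideal M -> (forall i, M ('X_i - (x i)%:MP)) -> M (p - (p.@[x])%:MP).
Proof.
move=> M_ideal MX.
pose G q := M (q - (q.@[x])%:MP).
have GC c : G c%:MP by rewrite /G mevalC subrr; exact: ideal0.
have GD a b : G a -> G b -> G (a + b).
  move=> Ga Gb; rewrite /G mevalD mpolyCD.
  have -> : a + b - ((a.@[x])%:MP + (b.@[x])%:MP) =
    (a - (a.@[x])%:MP) + (b - (b.@[x])%:MP) by ring.
  exact: idealD.
have GM a b : G a -> G b -> G (a * b).
  move=> Ga Gb; rewrite /G mevalM mpolyCM.
  have -> : a * b - (a.@[x])%:MP * (b.@[x])%:MP =
    a * (b - (b.@[x])%:MP) + (b.@[x])%:MP * (a - (a.@[x])%:MP) by ring.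
  by apply: idealD => //; apply: idealMl.
have GXn i k : G ('X_i ^+ k).
  elim: k => [|k IH]; first by rewrite expr0 -mpolyC1.
  by rewrite exprS; apply: GM => //; rewrite /G mevalXU.
rewrite -/(G p) [p]mpolyE; apply: (big_ind G); [by rewrite -mpolyC0 | exact: GD |].
move=> m _; rewrite -mul_mpolyC mpolyXE_id; apply: (GM) => //.
by apply: (big_ind G); [rewrite -mpolyC1 | exact: GM | move=> i _; exact: GXn].
Qed.

End MpolyIdeals.

Lemma mpoly_lin_dependent (K : fieldType) (n N : nat) (B : seq 'X_{1..n})
    (us : 'I_N.+1 -> {mpoly K[n]}) :
  (size B <= N)%N -> (forall j, {subset msupp (us j) <= B}) ->
  exists v : 'I_N.+1 -> K, (exists j, v j != 0) /\ \sum_j v j *: us j = 0.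
Proof.
move=> sizeB suppB.
pose A : 'M[K]_(N.+1, size B) := \matrix_(j, l) (us j)@_(nth 0%MM B l).
have [v vA v0] : exists2 v : 'rV_N.+1, v *m A = 0 & v != 0.
  apply: boolp.contrapT => noker.
  have : row_free A.
    apply: inj_row_free => v vA; apply/eqP; apply: contraT => v0.
    by case: noker; exists v.
  rewrite /row_free => /eqP rkA.
  by have := rank_leq_col A; rewrite rkA => /leq_trans/(_ sizeB); rewrite ltnn.
exists (v 0); split; first exact/rV0Pn.
apply/mpolyP => m; rewrite mcoeff0 raddf_sum /=.
under eq_bigr do rewrite mcoeffZ.
have [mB|mB] := boolP (m \in B); last first.
  by rewrite big1 // => j _; rewrite memN_msupp_eq0 ?mulr0 //; apply: contra mB; apply: suppB.
have iB : (index m B < size B)%N by rewrite index_mem.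
have := congr1 (fun w : 'rV_(size B) => w 0 (Ordinal iB)) vA.
rewrite !mxE /= => vAm; rewrite -[RHS]vAm; apply: eq_bigr => j _.
by rewrite mxE /= nth_index.
Qed.

Lemma lagrange_sum_neq0 (K : idomainType) (N : nat) (c : 'I_N -> K)
    (v : 'I_N -> K) (j0 : 'I_N) :
  injective c -> v j0 != 0 ->
  \sum_j v j *: \prod_(l | l != j) ('X - (c l)%:P) != 0.
Proof.
move=> c_inj vj0; apply: contraNneq vj0 => /(congr1 (horner^~ (c j0))).
rewrite horner0 horner_sum (bigD1 j0) //= [X in _ + X]big1 => [|j jj0]; last first.
  rewrite hornerZ horner_prod (bigD1 j0) 1?eq_sym //=.
  by rewrite hornerXsubC subrr mul0r mulr0.
rewrite addr0 hornerZ horner_prod => /eqP; rewrite mulf_eq0 => /orP[/eqP//|].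
rewrite prodf_seq_eq0 => /hasP[l _ /andP[lj0]].
by rewrite hornerXsubC subr_eq0 => /eqP/c_inj lE; rewrite lE eqxx in lj0.
Qed.

(* The terms [u j * X j] cancel out in the sum since [\sum_j v j *: u j = 0]. *)
Lemma mul_lagrange_sum_dependent (K : comNzRingType) (A : comAlgType K) (N : nat)
    (v : 'I_N -> K) (u X : 'I_N -> A) (a : A) :
  \sum_j v j *: u j = 0 ->
  a * \sum_j v j *: \prod_(l | l != j) X l =
  \sum_j v j *: (\prod_(l | l != j) X l * (a - u j * X j)).
Proof.
move=> vu0.
have cancel : \sum_j v j *: (u j * X j * \prod_(l | l != j) X l) = 0.
  transitivity ((\sum_j v j *: u j) * \prod_l X l); last by rewrite vu0 mul0r.
  rewrite mulr_suml; apply: eq_bigr => j _.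
  by rewrite [in RHS](bigD1 j) //= -scalerAl mulrA.
rewrite -[LHS]subr0 -[X in _ - X]cancel mulr_sumr -sumrB; apply: eq_bigr => j _.
by rewrite -!scalerAr -scalerBr; congr (_ *: _); ring.
Qed.

Section ClosedField.
Variables (K : closedFieldType) (n : nat).
Local Notation P := {mpoly K[n]}.

Section MaximalAvoidingMpoly.
Variables (M : set P) (f : P) (Mmax : maximal_avoiding M f).

Let M_ideal : is_ring_ideal M. Proof. by case: Mmax. Qed.

Lemma maximal_avoiding_const c : c != 0 -> ~ M c%:MP.
Proof.
move=> c0 Mc; apply: (maximal_avoiding_proper Mmax).
have -> : (1 : P) = (c^-1)%:MP * c%:MP by rewrite -mpolyCM mulVf.
exact: idealMl.
Qed.

Lemma maximal_avoiding_linear_factor (i : 'I_n) (p : {poly K}) :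
  p != 0 -> M (map_poly (@mpolyC n K) p).['X_i] -> exists z, M ('X_i - z%:MP).
Proof.
move=> p0; have cX : commr_rmorph (mpolyC n (R := K)) 'X_i by move=> a; apply: mulrC.
rewrite -[_.['X_i]]/(horner_morph cX p).
have [rs ->] := closed_field_poly_normal p; rewrite -mul_polyC rmorphM /=.
rewrite horner_morphC rmorph_prod /=.
have lead0 : lead_coef p != 0 by rewrite lead_coef_eq0.
case/(maximal_avoiding_prime Mmax) => [/(maximal_avoiding_const lead0)//|].
elim: rs => [|z rs IH].
  by rewrite big_nil -mpolyC1 => /(maximal_avoiding_const (oner_neq0 K)).
rewrite big_cons rmorphB /= horner_morphX horner_morphC.
by case/(maximal_avoiding_prime Mmax) => [Mz|]; [exists z | apply: IH].
Qed.

Hypothesis K_uncountable : uncountable K.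

(* If no [X_i - c] lies in [M], then for each of the uncountably many [c] we
   get [f ^+ k = u * (X_i - c) mod M]; [(size B).+1] of the [c] share the same
   [k] and the same support [B] of [u], so their [u] are linearly dependent, and
   the corresponding Lagrange-type combination of the [X_i - c] is a nonzero
   polynomial in [X_i] lying in [M]. *)
Lemma maximal_avoiding_var (i : 'I_n) : exists c, M ('X_i - c%:MP).
Proof.
apply: boolp.contrapT => /boolp.forallNP noroot.
have cofactor c : exists ku : nat * P, M (ku.2 * ('X_i - c%:MP) - f ^+ ku.1).
  case: Mmax => _ _ /(_ _ (noroot c)) [k [u [m [Mm E]]]].
  by exists (k, u); rewrite /= E opprD addNKr; apply: idealN.
have [F MF] := boolp.choice cofactor.
have [[k B] [s [s_uniq s_size Fs]]] := uncountable_large_fibre 0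
  (fun c => ((F c).1, msupp (F c).2)) (fun t => size t.2) K_uncountable.
pose c (j : 'I_(size B).+1) := nth 0 s j.
have c_inj : injective c.
  by move=> j1 j2 /eqP; rewrite /c nth_uniq ?s_size // => /eqP /val_inj.
have Fc j : (F (c j)).1 = k /\ msupp (F (c j)).2 = B.
  by have := Fs (c j) (mem_nth 0 _); rewrite s_size => /(_ (ltn_ord j)) [-> ->].
have suppF j : {subset msupp (F (c j)).2 <= B} by rewrite (Fc j).2.
have [v [[j0 vj0] vF0]] := mpoly_lin_dependent (leqnn _) suppF.
pose p := \sum_j v j *: \prod_(l | l != j) ('X - (c l)%:P).
have cX : commr_rmorph (mpolyC n (R := K)) 'X_i by move=> a; apply: mulrC.
have pX : horner_morph cX p = \sum_j v j *: \prod_(l | l != j) ('X_i - (c l)%:MP).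
  rewrite rmorph_sum; apply: eq_bigr => j _.
  rewrite -mul_polyC rmorphM /= horner_morphC rmorph_prod /= mul_mpolyC.
  by congr (_ *: _); apply: eq_bigr => l _; rewrite rmorphB /= horner_morphX horner_morphC.
have : M (f ^+ k * horner_morph cX p).
  rewrite pX (mul_lagrange_sum_dependent _ _ vF0); apply: (ideal_sum M_ideal) => j.
  rewrite -mul_mpolyC; apply: (idealMl M_ideal); apply: (idealMl M_ideal).
  by rewrite -(Fc j).1 -opprB; apply: (idealN M_ideal).
case/(maximal_avoiding_prime Mmax) => [|/maximal_avoiding_linear_factor].
  by case: Mmax => _ /(_ k).
by case=> [|z /noroot //]; apply: lagrange_sum_neq0 vj0.
Qed.

End MaximalAvoidingMpoly.

Theorem nullstellensatz (J : set P) (f : P) :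
  uncountable K -> is_ring_ideal J -> avoids_powers J f ->
  exists x : 'I_n -> K, (forall g, J g -> g.@[x] = 0) /\ f.@[x] != 0.
Proof.
move=> K_unc J_ideal Jf.
have [M [JM Mmax]] := maximal_avoiding_exists J_ideal Jf.
have M_ideal : is_ring_ideal M by case: Mmax.
have [x Mx] := boolp.choice (maximal_avoiding_var Mmax K_unc).
have Mcong := mpoly_sub_meval_ideal _ M_ideal Mx.
exists x; split=> [g Jg|].
  apply/eqP; apply: contraT => g0; case: (maximal_avoiding_const Mmax g0).
  have -> : (g.@[x])%:MP = g - (g - (g.@[x])%:MP) by ring.
  by apply: idealB => //; apply: JM.
apply/negP => /eqP f0; have := Mcong f.
by case: Mmax => _ /(_ 1%N); rewrite f0 mpolyC0 subr0 expr1.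
Qed.

End ClosedField.

Section ContinuousPolynomials.
Variables (R : realType) (n : nat).
Local Notation C := R[i].
Local Notation P := (Cpoly R n).

Lemma continuous_sumC (T : topologicalType) (I : Type) (r : seq I) (Pr : pred I)
    (F : I -> T -> C) :
  (forall i, continuous (F i)) -> continuous (fun s => \sum_(i <- r | Pr i) F i s).
Proof. by move=> Fc; apply: continuous_big => [|i _]; [exact: (@add_continuous C^o) | exact: Fc]. Qed.

Lemma contpolyMl (T : topologicalType) (q : P) (h : T -> P) :
  contpoly h -> contpoly (fun s => q * h s).
Proof.
move=> [[ms supp] cont]; split.
  exists [seq (a + b)%MM | a <- msupp q, b <- ms] => s m.
  rewrite mcoeff_msupp mcoeffM; apply: contraR => notm.
  rewrite big1 // => k /eqP mk.
  have [k1|k1] := boolP ((k.1 : 'X_{1..n}) \in msupp q); last first.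
    by rewrite memN_msupp_eq0 // mul0r.
  have [k2|k2] := boolP ((k.2 : 'X_{1..n}) \in msupp (h s)); last first.
    by rewrite (memN_msupp_eq0 k2) mulr0.
  by case/negP: notm; rewrite [X in X \in _]mk; apply: allpairs_f => //; exact: (supp s).
move=> m; have -> : (fun s => (q * h s)@_m) = (fun s =>
    \sum_(k : 'X_{1..n < (mdeg m).+1, (mdeg m).+1} | m == (k.1 + k.2)%MM)
      q@_k.1 * (h s)@_k.2).
  by apply: boolp.funext => s; rewrite mcoeffM.
apply: continuous_sumC => k x.
exact: (@cvgMl_tmp C T (nbhs x) _ _ _ _ (cont _ x)).
Qed.

End ContinuousPolynomials.

Section FibreIdeal.
Variables (R : realType) (n : nat) (S : topologicalType).
Variables (I : set (S -> Cpoly R n)) (U : set S).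

Lemma ideal_on0 : ideal_on I U (fun _ => 0).
Proof.
exists 0%N, (fun _ _ => 0), (fun _ _ => 0); split; try by case.
by apply: boolp.funext => s; rewrite big_ord0.
Qed.

Lemma ideal_onD g1 g2 :
  ideal_on I U g1 -> ideal_on I U g2 -> ideal_on I U (fun s => g1 s + g2 s).
Proof.
move=> [k1 [h1 [f1 [ch1 If1 ->]]]] [k2 [h2 [f2 [ch2 If2 ->]]]].
pose h i := match fintype.split i with inl a => h1 a | inr b => h2 b end.
pose f i := match fintype.split i with inl a => f1 a | inr b => f2 b end.
exists (k1 + k2)%N, h, f; split.
- by move=> i; rewrite /h; case: (fintype.split i) => a; [exact: ch1 | exact: ch2].
- by move=> i; rewrite /f; case: (fintype.split i) => a; [exact: If1 | exact: If2].
have splitl i : fintype.split (lshift k2 i) = inl i := unsplitK (inl _ i).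
have splitr i : fintype.split (rshift k1 i) = inr i := unsplitK (inr _ i).
apply: boolp.funext => s; rewrite big_split_ord /=.
by congr (_ + _); apply: eq_bigr => i _; rewrite /h /f ?splitl ?splitr.
Qed.

Lemma ideal_onMl q g : ideal_on I U g -> ideal_on I U (fun s => q * g s).
Proof.
move=> [k [h [f [ch If ->]]]].
exists k, (fun i s => q * h i s), f; split; [by move=> i; apply: contpolyMl | exact: If |].
by apply: boolp.funext => s; rewrite mulr_sumr; apply: eq_bigr => i _; rewrite mulrA.
Qed.

Lemma fibre_ideal_is_ring_ideal s : is_ring_ideal (fibre_ideal I U s).
Proof.
split.
- by exists (fun _ => 0); split; [apply: ideal_on0 |].
- move=> _ _ [g1 [Ig1 ->]] [g2 [Ig2 ->]].
  by exists (fun s => g1 s + g2 s); split; [apply: ideal_onD |].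
- by move=> q _ [g [Ig ->]]; exists (fun s => q * g s); split; [apply: ideal_onMl |].
Qed.

End FibreIdeal.

Theorem mainTheorem1 (R : realType) (n : nat) (S : topologicalType)
    (I : set (S -> Cpoly R n)) :
  is_ideal I ->
  forall U : set S, open U -> IV I U = FRad I U.
Proof.
move=> _ U _; apply/seteqP; split=> f [f_cont f_prop]; split=> // s.
  apply: boolp.contrapT => not_rad.
  have [x [Jx fx]] := nullstellensatz (@complex_uncountable R)
    (@fibre_ideal_is_ring_ideal _ _ _ I U s) (fun k Jk => not_rad (ex_intro _ k Jk)).
  by move/eqP: fx; apply; apply: f_prop => g Ig; apply: Jx; exists g.
move=> x Vx; have [k [g [Ig fk]]] := f_prop s.
have := Vx g Ig; rewrite /= -fk rmorphXn => /eqP.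
by rewrite expf_eq0 => /andP[_ /eqP].
Qed.
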